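(* Let $d\ge2$, $n\ge1$ be integers and, for real $b,c$, let $$\rho_{bc}=a\sum_{i=0}^{d-1}|ii\rangle\langle ii|+b\sum_{i<j}|\psi^-_{ij}\rangle\langle\psi^-_{ij}|+c\sum_{i<j}|\psi^+_{ij}\rangle\langle\psi^+_{ij}|,\quad a=\frac1d\Big(1-(b+c)\frac{d(d-1)}2\Big).$$ Let $B=\big(\tfrac{1}{d(d-1)},0\big)$, $G=\big(\tfrac{3}{d(2d-1)},\tfrac{1}{d(2d-1)}\big)$, $K=\big(\tfrac1{d(d-1)},\tfrac1{d(d-1)}\big)$. If $\rho_{G}$ (the state $\rho_{bc}$ with $(b,c)=G$) is pseudo $n$-copy undistillable, then $\rho_{bc}$ is pseudo $n$-copy undistillable for every $(b,c)$ in the triangle (convex hull) $BGK$.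
   Context: $|\psi^{\pm}_{ij}\rangle=\frac1{\sqrt2}(|ij\rangle\pm|ji\rangle)$, sums over $0\le i<j\le d-1$. For a bipartite state $\rho$ on $\mathcal{H}_A\otimes\mathcal{H}_B$, $\rho^{PT}$ is the partial transpose on $\mathcal{H}_B$. $\rho$ is pseudo one-copy undistillable if $\langle\phi|\rho^{PT}|\phi\rangle\ge0$ for all $|\phi\rangle$ of Schmidt rank two; $\rho$ is pseudo $n$-copy undistillable if $\rho^{\otimes n}$, viewed as a bipartite state on $\mathcal{H}_A^{\otimes n}\otimes\mathcal{H}_B^{\otimes n}$, is pseudo one-copy undistillable. *)

From HB Require Import structures.
From mathcomp Require Import all_boot all_order all_algebra.
From mathcomp Require Import algC.
Set Implicit Arguments. Unset Strict Implicit. Unset Printing Implicit Defensive.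
Import Order.TTheory GRing.Theory Num.Theory.
Local Open Scope ring_scope.

(* Vectors of H_A (x) H_B, with H_A, H_B having orthonormal bases indexed by
   finite types A, B, are functions A * B -> algC (coordinates in |a b>). *)
Definition bvec (A B : finType) := (A * B)%type -> algC.
(* Operators on H_A (x) H_B: X x y = <x| X |y>. *)
Definition bop (A B : finType) := (A * B)%type -> (A * B)%type -> algC.

Definition ptrans (A B : finType) (X : bop A B) : bop A B :=
  fun x y => X (x.1, y.2) (y.1, x.2).

Definition schmidt_rank (A B : finType) (phi : bvec A B) : nat :=
  \rank (\matrix_(i < #|A|, j < #|B|) phi (enum_val i, enum_val j)).

Definition qform (A B : finType) (X : bop A B) (phi : bvec A B) : algC :=
  \sum_x \sum_y (phi x)^* * X x y * phi y.

Definition pseudo_one_copy_undistillable (A B : finType) (X : bop A B) : Prop :=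
  forall phi : bvec A B, schmidt_rank phi = 2%N -> 0 <= qform (ptrans X) phi.

(* X^{(x) n}, regrouped as a bipartite operator on H_A^{(x)n} (x) H_B^{(x)n};
   a basis vector of H_A^{(x)n} is indexed by (a_1,...,a_n). *)
Definition tens_pow (A B : finType) (n : nat) (X : bop A B)
  : bop {ffun 'I_n -> A} {ffun 'I_n -> B} :=
  fun x y => \prod_(k < n) X (x.1 k, x.2 k) (y.1 k, y.2 k).

Definition pseudo_n_copy_undistillable (A B : finType) (n : nat) (X : bop A B) : Prop :=
  pseudo_one_copy_undistillable (@tens_pow A B n X).

Definition ket (d : nat) (i j : 'I_d) : bvec 'I_d 'I_d :=
  fun x => (x == (i, j))%:R.
(* |psi^{+-}_{ij}> = (|ij> +- |ji>)/sqrt 2, sign s = 1 or -1 *)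
Definition psi (d : nat) (s : algC) (i j : 'I_d) : bvec 'I_d 'I_d :=
  fun x => (sqrtC 2)^-1 * (ket i j x + s * ket j i x).
Definition proj (A B : finType) (v : bvec A B) : bop A B :=
  fun x y => v x * (v y)^*.

Definition coef_a (d : nat) (b c : algC) : algC :=
  (d%:R)^-1 * (1 - (b + c) * (d%:R * (d%:R - 1) / 2)).

Definition rho_bc (d : nat) (b c : algC) : bop 'I_d 'I_d :=
  fun x y =>
    coef_a d b c * (\sum_(i < d) proj (ket i i) x y)
    + b * (\sum_(i < d) \sum_(j < d | (i < j)%N) proj (psi (-1) i j) x y)
    + c * (\sum_(i < d) \sum_(j < d | (i < j)%N) proj (psi 1 i j) x y).

Arguments rho_bc d b c : clear implicits.

Definition ptB (d : nat) : algC * algC := ((d%:R * (d%:R - 1))^-1, 0).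
Definition ptG (d : nat) : algC * algC :=
  (3 / (d%:R * (2 * d%:R - 1)), 1 / (d%:R * (2 * d%:R - 1))).
Definition ptK (d : nat) : algC * algC :=
  ((d%:R * (d%:R - 1))^-1, (d%:R * (d%:R - 1))^-1).

(* (b,c) lies in the convex hull of P, Q, R (real convex combinations) *)
Definition in_triangle (P Q R : algC * algC) (b c : algC) : Prop :=
  exists l1 l2 l3 : algC,
    [/\ 0 <= l1, 0 <= l2, 0 <= l3 & l1 + l2 + l3 = 1] /\
    b = l1 * P.1 + l2 * Q.1 + l3 * R.1 /\
    c = l1 * P.2 + l2 * Q.2 + l3 * R.2.

From mathcomp Require Import all_boot all_order all_algebra.
From mathcomp Require Import algC.
From mathcomp Require Import ring.
Set Implicit Arguments. Unset Strict Implicit. Unset Printing Implicit Defensive.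
Import Order.TTheory GRing.Theory Num.Theory.
Local Open Scope ring_scope.

(* Write (b, c) = l1 B + l2 G + l3 K. Since a is affine in (b, c), the partial
   transpose splits as rho_bc^PT = l2 rho_G^PT + S with S = l1 rho_B^PT + l3 rho_K^PT,
   and S is a nonnegative combination of product projectors |e f><e f|: rho_K^PT is
   diagonal, and rho_B^PT is an average of product projectors over four phases.
   Expanding the n-th tensor power, each term is a tensor product of factors that are
   either rho_G^PT or product projectors. Conjugating rho_G^PT by the local rank-one map
   |z1><e| (x) |z2><f| yields <z1 z2|rho_G^PT|z1 z2> |e f><e f|, with a positive
   prefactor when z1 <> z2, and local maps do not increase the Schmidt rank. Hence every
   term is nonnegative on vectors of Schmidt rank at most two as soon as (rho_G^PT)^(x)n
   is, which holds by hypothesis in Schmidt rank two, and by positivity of rho_G in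
   Schmidt rank at most one because <e f|X^PT|e f> = <e f^*|X|e f^*>. *)

Section BigSums.
Variable T : finType.
Implicit Types (a b c e : T) (F : T -> algC).

Lemma sum_delta a F : \sum_i (i == a)%:R * F i = F a.
Proof.
rewrite (bigD1 a) //= eqxx mul1r big1 ?addr0 // => i /negPf ->.
by rewrite mul0r.
Qed.

Lemma sum_delta2 a b : \sum_i ((a == i)%:R * (b == i)%:R : algC) = (a == b)%:R.
Proof.
rewrite eq_sym -(sum_delta a (fun i => (b == i)%:R)).
by apply: eq_bigr => i _; rewrite eq_sym.
Qed.

Lemma sum_delta4 a b c e :
  \sum_i ((a == i)%:R * (b == i)%:R * (c == i)%:R * (e == i)%:R : algC) =
  (a == b)%:R * (a == c)%:R * (a == e)%:R.
Proof.
rewrite (eq_sym a b) (eq_sym a c) (eq_sym a e).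
rewrite -(sum_delta a (fun i => (b == i)%:R * (c == i)%:R * (e == i)%:R)).
by apply: eq_bigr => i _; rewrite (eq_sym i); ring.
Qed.

Lemma sum_offdiag (H : T -> T -> algC) :
  \sum_i \sum_j (i != j)%:R * H i j = \sum_i \sum_j H i j - \sum_i H i i.
Proof.
rewrite -sumrB; apply: eq_bigr => i _.
rewrite -(sum_delta i (H i)) -sumrB; apply: eq_bigr => j _.
by rewrite eq_sym; case: (j == i) => /=; ring.
Qed.

Lemma sum_enum F : \sum_i F i = \sum_(k < #|T|) F (enum_val k).
Proof. by rewrite (reindex _ (onW_bij _ (@enum_val_bij T))). Qed.

Lemma sum_option (G : option T -> algC) :
  \sum_o G o = G None + \sum_i G (Some i).
Proof.
rewrite (bigD1 None) //=; congr (_ + _).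
rewrite (reindex_omap Some id) /=; last by case.
by apply: eq_bigl => i; rewrite eqxx.
Qed.

End BigSums.

Lemma sum_pair (I J : finType) (F : I * J -> algC) :
  \sum_(p : I * J) F p = \sum_(i : I) \sum_(j : J) F (i, j).
Proof. by rewrite pair_bigA; apply: eq_bigr => -[]. Qed.

Lemma sum4_delta (A B : finType) (F : A -> B -> A -> B -> algC) p1 p2 q1 q2 :
  \sum_a \sum_b \sum_a' \sum_b'
    ((a == p1)%:R * (b == p2)%:R * (a' == q1)%:R * (b' == q2)%:R) * F a b a' b' =
  F p1 p2 q1 q2.
Proof.
transitivity (\sum_a \sum_b \sum_a' \sum_b' (b' == q2)%:R * ((a' == q1)%:R *
   ((b == p2)%:R * ((a == p1)%:R * F a b a' b')))).
  by do 4![apply: eq_bigr => ? _]; ring.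
under eq_bigr do under eq_bigr do under eq_bigr do rewrite sum_delta.
under eq_bigr do under eq_bigr do rewrite sum_delta.
by under eq_bigr do rewrite sum_delta; rewrite sum_delta.
Qed.

Lemma prod_sum4 n (A B : finType) (G : 'I_n -> A -> B -> A -> B -> algC) :
  \prod_(k < n) \sum_a \sum_b \sum_a' \sum_b' G k a b a' b' =
  \sum_(xa : {ffun 'I_n -> A}) \sum_(xb : {ffun 'I_n -> B})
  \sum_(ya : {ffun 'I_n -> A}) \sum_(yb : {ffun 'I_n -> B})
     \prod_(k < n) G k (xa k) (xb k) (ya k) (yb k).
Proof.
rewrite bigA_distr_bigA; apply: eq_bigr => xa _.
rewrite bigA_distr_bigA; apply: eq_bigr => xb _.
rewrite bigA_distr_bigA; apply: eq_bigr => ya _.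
by rewrite bigA_distr_bigA.
Qed.

Section QuadraticForm.
Variables A B : finType.
Implicit Types (X Y : bop A B) (phi : bvec A B).

Definition psd X := forall phi, 0 <= qform X phi.

Definition nonneg_on_rank2 X :=
  forall phi, (schmidt_rank phi <= 2)%N -> 0 <= qform X phi.

Definition rank_one_sum (M : finType) (w : M -> algC) (p : M -> bvec A B) : bop A B :=
  fun x y => \sum_m w m * proj (p m) x y.

Definition prod_vec (e : A -> algC) (f : B -> algC) : bvec A B :=
  fun x => e x.1 * f x.2.

Definition separable X :=
  exists (M : finType) (w : M -> algC) (e : M -> A -> algC) (f : M -> B -> algC),
    (forall m, 0 <= w m) /\ X =2 rank_one_sum w (fun m => prod_vec (e m) (f m)).

Lemma eq_qform X Y phi : X =2 Y -> qform X phi = qform Y phi.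
Proof. by move=> eXY; rewrite /qform; do 2![apply: eq_bigr => ? _]; rewrite eXY. Qed.

Lemma eq_qformr X phi psi : phi =1 psi -> qform X phi = qform X psi.
Proof. by move=> e; rewrite /qform; do 2![apply: eq_bigr => ? _]; rewrite !e. Qed.

Lemma qform_sum (M : finType) (F : M -> bop A B) phi :
  qform (fun x y => \sum_m F m x y) phi = \sum_m qform (F m) phi.
Proof.
rewrite /qform; symmetry; rewrite exchange_big; apply: eq_bigr => x _.
rewrite exchange_big; apply: eq_bigr => y _.
by rewrite mulr_sumr mulr_suml.
Qed.

Lemma qformZ c X phi : qform (fun x y => c * X x y) phi = c * qform X phi.
Proof.
rewrite /qform mulr_sumr; apply: eq_bigr => x _; rewrite mulr_sumr.
by apply: eq_bigr => y _; ring.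
Qed.

Lemma qform_proj p phi :
  qform (proj p) phi = (\sum_x (phi x)^* * p x) * (\sum_x (phi x)^* * p x)^*.
Proof.
rewrite /qform rmorph_sum mulr_suml; apply: eq_bigr => x _.
rewrite mulr_sumr; apply: eq_bigr => y _.
by rewrite /proj !rmorphM /= conjCK; ring.
Qed.

Lemma rank_one_sum_psd (M : finType) (w : M -> algC) (p : M -> bvec A B) :
  (forall m, 0 <= w m) -> psd (rank_one_sum w p).
Proof.
move=> w_ge0 phi; rewrite qform_sum; apply: sumr_ge0 => m _.
by rewrite qformZ qform_proj mulr_ge0 ?mul_conjC_ge0.
Qed.

Lemma eq_separable X Y : X =2 Y -> separable X -> separable Y.
Proof.
move=> eXY [M [w [e [f [w_ge0 eX]]]]]; exists M, w, e, f; split=> // x y.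
by rewrite -eXY eX.
Qed.

Lemma separableZ c X : 0 <= c -> separable X -> separable (fun x y => c * X x y).
Proof.
move=> c_ge0 [M [w [e [f [w_ge0 eX]]]]]; exists M, (fun m => c * w m), e, f.
split=> [m|x y]; first exact: mulr_ge0.
by rewrite eX /rank_one_sum mulr_sumr; apply: eq_bigr => m _; rewrite mulrA.
Qed.

Lemma separableD X Y : separable X -> separable Y -> separable (fun x y => X x y + Y x y).
Proof.
move=> [M [w [e [f [w_ge0 eX]]]]] [M' [w' [e' [f' [w'_ge0 eY]]]]].
exists (M + M')%type, (fun m => match m with inl m => w m | inr m => w' m end).
exists (fun m => match m with inl m => e m | inr m => e' m end).
exists (fun m => match m with inl m => f m | inr m => f' m end).
by split=> [[m|m] //|x y]; rewrite eX eY /rank_one_sum big_sumType.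
Qed.

End QuadraticForm.

Section LocalOperations.
Variables A B A' B' : finType.
Variables (L : A' -> A -> algC) (M : B' -> B -> algC).

Definition local_op (phi : bvec A B) : bvec A' B' :=
  fun x => \sum_y L x.1 y.1 * M x.2 y.2 * phi y.

Definition sandwich (X : bop A' B') : bop A B :=
  fun x' y' => \sum_x \sum_y
    (L x.1 x'.1 * M x.2 x'.2)^* * X x y * (L y.1 y'.1 * M y.2 y'.2).

Lemma sandwichE (X : bop A' B') x' y' :
  sandwich X x' y' = \sum_a \sum_b \sum_a' \sum_b'
    (L a x'.1 * M b x'.2)^* * X (a, b) (a', b') * (L a' y'.1 * M b' y'.2).
Proof.
rewrite /sandwich sum_pair; apply: eq_bigr => a _; apply: eq_bigr => b _.
by rewrite sum_pair.
Qed.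

Lemma qform_local_op (X : bop A' B') phi :
  qform X (local_op phi) = qform (sandwich X) phi.
Proof.
pose G x y x' y' := (L x.1 x'.1 * M x.2 x'.2 * phi x')^* * X x y *
   (L y.1 y'.1 * M y.2 y'.2 * phi y').
transitivity (\sum_x \sum_y \sum_x' \sum_y' G x y x' y').
  apply: eq_bigr => x _; apply: eq_bigr => y _.
  rewrite /local_op rmorph_sum !mulr_suml; apply: eq_bigr => x' _.
  by rewrite mulr_sumr.
transitivity (\sum_x' \sum_y' \sum_x \sum_y G x y x' y').
  under eq_bigr do rewrite exchange_big.
  rewrite exchange_big; apply: eq_bigr => x' _.
  by under eq_bigr do rewrite exchange_big; rewrite exchange_big.
apply: eq_bigr => x' _; apply: eq_bigr => y' _.
rewrite mulr_sumr mulr_suml; apply: eq_bigr => x _.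
rewrite mulr_sumr mulr_suml; apply: eq_bigr => y _.
by rewrite /G !rmorphM /=; ring.
Qed.

Lemma schmidt_rank_local_op phi :
  (schmidt_rank (local_op phi) <= schmidt_rank phi)%N.
Proof.
rewrite /schmidt_rank.
set P := \matrix_(i, j) phi (enum_val i, enum_val j).
pose Lm := \matrix_(i < #|A'|, j < #|A|) L (enum_val i) (enum_val j).
pose Mm := \matrix_(i < #|B|, j < #|B'|) M (enum_val j) (enum_val i).
have -> : \matrix_(i, j) local_op phi (enum_val i, enum_val j) = Lm *m P *m Mm.
  apply/matrixP => i j; rewrite !mxE /local_op sum_pair sum_enum.
  rewrite exchange_big sum_enum /=; apply: eq_bigr => j' _.
  rewrite !mxE mulr_suml; apply: eq_bigr => i' _.
  by rewrite !mxE; ring.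
exact: leq_trans (mxrankM_maxl _ _) (mxrankM_maxr _ _).
Qed.

Lemma nonneg_on_rank2_sandwich (X : bop A' B') :
  nonneg_on_rank2 X -> nonneg_on_rank2 (sandwich X).
Proof.
move=> X_ge0 phi rk_phi; rewrite -qform_local_op; apply: X_ge0.
exact: leq_trans (schmidt_rank_local_op phi) rk_phi.
Qed.

End LocalOperations.

Section TensorPower.
Variable n : nat.

Definition tens_prod (A B : finType) (Z : 'I_n -> bop A B) :
    bop {ffun 'I_n -> A} {ffun 'I_n -> B} :=
  fun x y => \prod_(k < n) Z k (x.1 k, x.2 k) (y.1 k, y.2 k).

Definition tens_map (T' T : finType) (L : 'I_n -> T' -> T -> algC) :
    {ffun 'I_n -> T'} -> {ffun 'I_n -> T} -> algC :=
  fun xa ya => \prod_(k < n) L k (xa k) (ya k).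

Lemma ptrans_tens_pow (A B : finType) (X : bop A B) :
  ptrans (tens_pow (n:=n) X) = tens_pow (n:=n) (ptrans X).
Proof. by []. Qed.

Lemma eq_tens_pow (A B : finType) (X Y : bop A B) :
  X =2 Y -> tens_pow (n:=n) X =2 tens_pow (n:=n) Y.
Proof. by move=> eXY x y; apply: eq_bigr => k _; rewrite eXY. Qed.

Lemma tens_pow_sum (A B M : finType) (F : M -> bop A B) :
  tens_pow (n:=n) (fun x y => \sum_m F m x y) =2
  fun x y => \sum_(s : {ffun 'I_n -> M}) tens_prod (fun k => F (s k)) x y.
Proof. by move=> x y; rewrite /tens_pow bigA_distr_bigA. Qed.

Lemma tens_pow_rank_one_sum_psd (A B M : finType) (w : M -> algC) (p : M -> bvec A B) :
  (forall m, 0 <= w m) -> psd (tens_pow (n:=n) (rank_one_sum w p)).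
Proof.
move=> w_ge0 phi.
rewrite (eq_qform _ (tens_pow_sum _)).
pose ws (s : {ffun 'I_n -> M}) := \prod_k w (s k).
pose ps s (x : {ffun 'I_n -> A} * {ffun 'I_n -> B}) := \prod_k p (s k) (x.1 k, x.2 k).
rewrite (@eq_qform _ _ _ (rank_one_sum ws ps)); last first.
  by move=> x y; apply: eq_bigr => s _; rewrite /ps /proj rmorph_prod -!big_split.
by apply: rank_one_sum_psd => s; apply: prodr_ge0.
Qed.

Lemma sandwich_tens_prod (A B A' B' : finType)
    (L : 'I_n -> A' -> A -> algC) (M : 'I_n -> B' -> B -> algC) (Z : 'I_n -> bop A' B') :
  sandwich (tens_map L) (tens_map M) (tens_prod Z) =2
  tens_prod (fun k => sandwich (L k) (M k) (Z k)).
Proof.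
move=> x' y'; rewrite /tens_prod.
under [RHS]eq_bigr do rewrite sandwichE.
rewrite prod_sum4 /sandwich sum_pair; apply: eq_bigr => xa _; apply: eq_bigr => xb _.
rewrite sum_pair; apply: eq_bigr => ya _; apply: eq_bigr => yb _ /=.
rewrite /tens_map !rmorphM !rmorph_prod /=.
under [RHS]eq_bigr do rewrite rmorphM.
by rewrite !big_split /=; ring.
Qed.

End TensorPower.

Section ProductVectors.
Variables A B : finType.

Lemma mulmx_le1E m n r (U : 'M[algC]_(m, r)) (V : 'M[algC]_(r, n)) i j :
  (r <= 1)%N -> (U *m V) i j = (\sum_k U i k) * (\sum_k V k j).
Proof. by case: r U V => [|[|r]] U V // _; rewrite mxE ?big_ord0 ?mul0r // !big_ord1. Qed.

Lemma schmidt_rank_le1P (phi : bvec A B) :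
  (schmidt_rank phi <= 1)%N -> exists e f, phi =1 prod_vec e f.
Proof.
rewrite /schmidt_rank; set P := \matrix_(i, j) _ => rkP.
exists (fun a => \sum_k col_base P (enum_rank a) k).
exists (fun b => \sum_k row_base P k (enum_rank b)).
by move=> [a b]; rewrite /prod_vec /= -mulmx_le1E // mulmx_base mxE !enum_rankK.
Qed.

Lemma qform_ptrans_prod_vec (X : bop A B) (e : A -> algC) (f : B -> algC) :
  qform (ptrans X) (prod_vec e f) = qform X (prod_vec e (fun b => (f b)^*)).
Proof.
rewrite /qform sum_pair [RHS]sum_pair; apply: eq_bigr => a1 _.
rewrite exchange_big sum_pair [RHS]exchange_big [RHS]sum_pair.
apply: eq_bigr => a2 _; rewrite [RHS]exchange_big.
apply: eq_bigr => b2 _; apply: eq_bigr => b1 _.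
by rewrite /prod_vec /ptrans /= !rmorphM /= conjCK; ring.
Qed.

Lemma nonneg_on_rank2_ptrans (X : bop A B) :
  psd X -> pseudo_one_copy_undistillable X -> nonneg_on_rank2 (ptrans X).
Proof.
move=> X_psd X_und phi.
rewrite leq_eqVlt => /orP[/eqP rk2|/schmidt_rank_le1P[e [f ef]]]; first exact: X_und.
by rewrite (eq_qformr _ ef) qform_ptrans_prod_vec; apply: X_psd.
Qed.

End ProductVectors.

Section Mixing.
Variables (A B : finType) (n : nat) (X : bop A B) (z : A * B).
Hypothesis X_zz_gt0 : 0 < X z z.
Implicit Type o : option ((A -> algC) * (B -> algC)).

Definition copy_op o : bop A B :=
  if o is Some (e, f) then proj (prod_vec e f) else X.

Definition copy_scale o : algC := if o is Some _ then X z z else 1.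

Definition copy_map_l o : A -> A -> algC :=
  if o is Some (e, _) then fun a a' => (a == z.1)%:R * (e a')^*
  else fun a a' => (a == a')%:R.

Definition copy_map_r o : B -> B -> algC :=
  if o is Some (_, f) then fun b b' => (b == z.2)%:R * (f b')^*
  else fun b b' => (b == b')%:R.

Lemma sandwich_copy o :
  sandwich (copy_map_l o) (copy_map_r o) X =2 fun x y => copy_scale o * copy_op o x y.
Proof.
move=> [x1 x2] [y1 y2]; rewrite sandwichE; case: o => [[e f]|] /=.
  have -> : X z z = X (z.1, z.2) (z.1, z.2) by rewrite -surjective_pairing.
  rewrite mulrC.
  rewrite -(sum4_delta (fun a b a' b' =>
    proj (prod_vec e f) (x1, x2) (y1, y2) * X (a, b) (a', b')) z.1 z.2 z.1 z.2).
  do 4![apply: eq_bigr => ? _].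
  by rewrite /proj /prod_vec /= !rmorphM /= !conjCK !conjC_nat; ring.
rewrite mul1r -(sum4_delta (fun a b a' b' => X (a, b) (a', b')) x1 x2 y1 y2).
do 4![apply: eq_bigr => ? _].
by rewrite /= !rmorphM /= !conjC_nat ![_ == x1]eq_sym ![_ == x2]eq_sym; ring.
Qed.

Lemma nonneg_on_rank2_tens_prod_copy (s : 'I_n -> option ((A -> algC) * (B -> algC))) :
  nonneg_on_rank2 (tens_pow (n:=n) X) ->
  nonneg_on_rank2 (tens_prod (fun k => copy_op (s k))).
Proof.
move=> X_ge0 phi rk_phi.
pose L := tens_map (fun k => copy_map_l (s k)).
pose R := tens_map (fun k => copy_map_r (s k)).
have sandwich_X : sandwich L R (tens_pow (n:=n) X) =2
    fun x y => (\prod_k copy_scale (s k)) * tens_prod (fun k => copy_op (s k)) x y.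
  move=> x y; rewrite (sandwich_tens_prod _ _ (fun=> X)) /tens_prod -big_split.
  by apply: eq_bigr => k _; apply: sandwich_copy.
have := nonneg_on_rank2_sandwich L R X_ge0 rk_phi.
rewrite (eq_qform _ sandwich_X) qformZ pmulr_rge0 //; apply: prodr_gt0 => k _.
by case: (s k).
Qed.

Lemma nonneg_on_rank2_tens_pow_mix (c0 : algC) (S Y : bop A B) :
  0 <= c0 -> separable S -> Y =2 (fun x y => c0 * X x y + S x y) ->
  nonneg_on_rank2 (tens_pow (n:=n) X) -> nonneg_on_rank2 (tens_pow (n:=n) Y).
Proof.
move=> c0_ge0 [M [w [e [f [w_ge0 eS]]]]] eY X_ge0 phi rk_phi.
pose W (o : option M) := if o is Some m then w m else c0.
pose C (o : option M) := omap (fun m => (e m, f m)) o.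
have eY' : Y =2 fun x y => \sum_o W o * copy_op (C o) x y.
  by move=> x y; rewrite eY eS sum_option.
rewrite (eq_qform _ (eq_tens_pow eY')) (eq_qform _ (tens_pow_sum _)) qform_sum.
apply: sumr_ge0 => s _.
rewrite (@eq_qform _ _ _ (fun x y => (\prod_k W (s k)) *
  tens_prod (fun k => copy_op (C (s k))) x y)); last first.
  by move=> x y; rewrite /tens_prod -big_split.
rewrite qformZ mulr_ge0 //; last exact: nonneg_on_rank2_tens_prod_copy.
by apply: prodr_ge0 => k _; case: (s k).
Qed.

End Mixing.

Lemma sum_four_phases (a1 b1 a2 b2 a3 b3 a4 b4 : algC) :
  \sum_(k < 4) (a1 + 'i ^+ k * b1) * (a2 - (- 'i) ^+ k * b2) *
               ((a3 + (- 'i) ^+ k * b3) * (a4 - 'i ^+ k * b4)) =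
  4 * (a1 * a2 * a3 * a4 + b1 * b2 * b3 * b4 + a1 * b2 * a3 * b4 + b1 * a2 * b3 * a4
       - a1 * a2 * b3 * b4 - b1 * b2 * a3 * a4).
Proof.
rewrite !big_ord_recr big_ord0 /=.
have i2 : ('i : algC) ^+ 2 = -1 := sqrCi _.
have i3 : ('i : algC) ^+ 3 = - 'i by rewrite exprS i2 mulrN1.
have mi2 : (- ('i : algC)) ^+ 2 = -1 by rewrite sqrrN.
have mi3 : (- ('i : algC)) ^+ 3 = 'i by rewrite exprS mi2 mulrN1 opprK.
rewrite i3 mi3 i2 mi2.
transitivity ((a1 + b1) * (a2 - b2) * ((a3 + b3) * (a4 - b4)) +
  (a1 - b1) * (a2 + b2) * ((a3 - b3) * (a4 + b4)) +
  2 * (a1 * a2 * a3 * a4 + (b1 * b2 * a3 * a4 + a1 * a2 * b3 * b4 - b1 * a2 * b3 * a4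
        - b1 * a2 * a3 * b4 - a1 * b2 * b3 * a4 - a1 * b2 * a3 * b4) * 'i ^+ 2
        + b1 * b2 * b3 * b4 * ('i ^+ 2) ^+ 2)).
  ring.
by rewrite i2; ring.
Qed.

Section TwoQudits.
Variable d : nat.
Implicit Types (i j p q r t : 'I_d) (x y : 'I_d * 'I_d).

Definition id_op : bop 'I_d 'I_d := fun x y => (x.1 == y.1)%:R * (x.2 == y.2)%:R.
Definition max_ent_op : bop 'I_d 'I_d := fun x y => (x.1 == x.2)%:R * (y.1 == y.2)%:R.
Definition diag_op : bop 'I_d 'I_d :=
  fun x y => (x.1 == x.2)%:R * (x.1 == y.1)%:R * (x.1 == y.2)%:R.

Lemma ketE p q x : ket p q x = (x.1 == p)%:R * (x.2 == q)%:R.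
Proof. by case: x => a b; rewrite /ket xpair_eqE -mulnb natrM. Qed.

Lemma sum_proj_ket_diag x y : \sum_(i < d) proj (ket i i) x y = diag_op x y.
Proof.
rewrite /diag_op -sum_delta4; apply: eq_bigr => i _.
by rewrite /proj !ketE !rmorphM /= !conjC_nat; ring.
Qed.

Lemma sum_lt_delta p q (F : 'I_d -> 'I_d -> algC) :
  \sum_(i < d) \sum_(j < d | (i < j)%N) (p == i)%:R * (q == j)%:R * F i j =
  (p < q)%:R * F p q.
Proof.
rewrite (bigD1 p) //= [X in _ + X]big1 ?addr0 => [|i /negPf ip]; last first.
  by apply: big1 => j _; rewrite eq_sym ip !mul0r.
rewrite big_mkcond /= -(sum_delta q (fun j => (p < j)%:R * F p j)).
by apply: eq_bigr => j _; rewrite eqxx (eq_sym q); case: (p < j)%N => /=; ring.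
Qed.

Lemma lt_add_gtE p q : (p < q)%:R + (q < p)%:R = (p != q)%:R :> algC.
Proof.
rewrite -(inj_eq val_inj) /= -natrD; congr _%:R.
by case: ltngtP.
Qed.

Lemma sum_proj_psi s x y : s * s = 1 -> s^* = s ->
  \sum_(i < d) \sum_(j < d | (i < j)%N) proj (psi s i j) x y =
  2^-1 * (x.1 != x.2)%:R *
    ((x.1 == y.1)%:R * (x.2 == y.2)%:R + s * ((x.1 == y.2)%:R * (x.2 == y.1)%:R)).
Proof.
move=> ss1 s_real; case: x y => [p q] [r t] /=.
have sqrt2_sq : (sqrtC 2)^-1 * ((sqrtC 2)^-1)^* = 2^-1 :> algC.
  by rewrite fmorphV /= geC0_conj ?sqrtC_ge0 ?ler0n // -invfM -expr2 sqrtCK.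
transitivity (2^-1 * (
  \sum_(i < d) \sum_(j < d | (i < j)%N) (p == i)%:R * (q == j)%:R *
      ((r == i)%:R * (t == j)%:R + s * ((r == j)%:R * (t == i)%:R)) +
  \sum_(i < d) \sum_(j < d | (i < j)%N) (q == i)%:R * (p == j)%:R *
      (s * ((r == i)%:R * (t == j)%:R) + s * s * ((r == j)%:R * (t == i)%:R)))).
  rewrite -big_split mulr_sumr; apply: eq_bigr => i _.
  rewrite -big_split mulr_sumr; apply: eq_bigr => j _.
  rewrite /proj /psi !ketE /= !rmorphM rmorphD /= !rmorphM /= s_real !conjC_nat.
  rewrite -sqrt2_sq; ring.
rewrite !sum_lt_delta ss1 -(lt_add_gtE p q).
rewrite [r == p]eq_sym [t == q]eq_sym [t == p]eq_sym [r == q]eq_sym; ring.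
Qed.

Lemma ptrans_rho_bcE b c x y :
  ptrans (rho_bc d b c) x y =
  coef_a d b c * diag_op x y + b / 2 * (id_op x y - max_ent_op x y)
  + c / 2 * (id_op x y + max_ent_op x y - 2 * diag_op x y).
Proof.
case: x y => [x1 x2] [y1 y2].
rewrite /ptrans /rho_bc sum_proj_ket_diag.
rewrite !sum_proj_psi ?mulN1r ?opprK ?mulr1 ?rmorphN ?rmorph1 //.
rewrite /diag_op /id_op /max_ent_op /=.
case: (eqVneq x1 y2) => [<-|_] /=.
  by rewrite (eq_sym x2) (eq_sym y1); ring.
by rewrite (eq_sym y2 x2) (eq_sym y2 y1); ring.
Qed.

Definition ket_op p q r t : bop 'I_d 'I_d :=
  fun x y => (x.1 == p)%:R * (x.2 == q)%:R * ((y.1 == r)%:R * (y.2 == t)%:R).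

Lemma proj_ket p q : proj (ket p q) =2 ket_op p q p q.
Proof. by move=> x y; rewrite /proj !ketE rmorphM /= !conjC_nat. Qed.

Lemma sum_ket_op_diag x y : \sum_i ket_op i i i i x y = diag_op x y.
Proof. by rewrite /diag_op -sum_delta4; apply: eq_bigr => i _; rewrite /ket_op mulrA. Qed.

Lemma sum_ket_op_id x y : \sum_i \sum_j ket_op i j i j x y = id_op x y.
Proof.
rewrite /id_op -!sum_delta2 big_distrlr /=; do 2![apply: eq_bigr => ? _].
by rewrite /ket_op; ring.
Qed.

Lemma sum_ket_op_max_ent x y : \sum_i \sum_j ket_op i i j j x y = max_ent_op x y.
Proof.
rewrite /max_ent_op -!sum_delta2 big_distrlr /=; do 2![apply: eq_bigr => ? _].
by rewrite /ket_op; ring.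
Qed.

Definition pair_op i j : bop 'I_d 'I_d := fun x y =>
  ket_op i i i i x y + ket_op j j j j x y + ket_op i j i j x y + ket_op j i j i x y
  - ket_op i i j j x y - ket_op j j i i x y.

Lemma sum_offdiag_pair_op x y :
  \sum_i \sum_j (i != j)%:R * pair_op i j x y =
  2 * (id_op x y - max_ent_op x y + (d%:R - 1) * diag_op x y).
Proof.
have diag_part : \sum_i pair_op i i x y = 2 * diag_op x y.
  by rewrite -sum_ket_op_diag mulr_sumr; apply: eq_bigr => i _; rewrite /pair_op; ring.
rewrite sum_offdiag diag_part /pair_op.
under eq_bigr do rewrite !sumrB !big_split /=.
rewrite !sumrB !big_split /= sum_ket_op_id sum_ket_op_max_ent.
have ->: \sum_(i < d) \sum_(j < d) ket_op i i i i x y = d%:R * diag_op x y.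
  rewrite -sum_ket_op_diag mulr_sumr.
  by apply: eq_bigr => i _; rewrite sumr_const card_ord mulr_natl.
have ->: \sum_(i < d) \sum_(j < d) ket_op j j j j x y = d%:R * diag_op x y.
  rewrite exchange_big -sum_ket_op_diag mulr_sumr.
  by apply: eq_bigr => i _; rewrite sumr_const card_ord mulr_natl.
have ->: \sum_(i < d) \sum_(j < d) ket_op j i j i x y = id_op x y.
  by rewrite exchange_big; exact: sum_ket_op_id.
have ->: \sum_(i < d) \sum_(j < d) ket_op j j i i x y = max_ent_op x y.
  by rewrite exchange_big; exact: sum_ket_op_max_ent.
by rewrite mulrBl mul1r; ring.
Qed.

Lemma separable_id_sub_diag : separable (fun x y => id_op x y - diag_op x y).
Proof.
exists ('I_d * 'I_d)%type, (fun m => (m.1 != m.2)%:R).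
exists (fun m p => (p == m.1)%:R), (fun m q => (q == m.2)%:R).
split=> // x y; rewrite /rank_one_sum sum_pair.
rewrite (eq_bigr (fun i => \sum_j (i != j)%:R * ket_op i j i j x y)); last first.
  move=> i _; apply: eq_bigr => j _; rewrite -proj_ket.
  by congr (_ * _); rewrite /proj /prod_vec !ketE.
rewrite sum_offdiag sum_ket_op_id -sum_ket_op_diag.
by congr (_ - _); apply: eq_bigr => i _.
Qed.

(* Averaging over the phases w = 'i ^+ k the projectors onto
   (|i> + w|j>) (x) (|i> - w^*|j>) kills all cross terms but |ii><jj| and |jj><ii|. *)
Definition phase_l (m : ('I_d * 'I_d) * 'I_4) p : algC :=
  (p == m.1.1)%:R + 'i ^+ m.2 * (p == m.1.2)%:R.
Definition phase_r (m : ('I_d * 'I_d) * 'I_4) q : algC :=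
  (q == m.1.1)%:R - (- 'i) ^+ m.2 * (q == m.1.2)%:R.

Lemma sum_proj_phases i j x y :
  \sum_(k < 4) proj (prod_vec (phase_l (i, j, k)) (phase_r (i, j, k))) x y =
  4 * pair_op i j x y.
Proof.
rewrite /proj /prod_vec /phase_l /phase_r /=.
under eq_bigr do rewrite !rmorphM rmorphD rmorphB /= !rmorphM /= !conjC_nat
  !rmorphXn /= rmorphN /= conjCi opprK.
by rewrite sum_four_phases /pair_op /ket_op; ring.
Qed.

Lemma separable_id_sub_max_ent_add_diag :
  separable (fun x y => id_op x y - max_ent_op x y + (d%:R - 1) * diag_op x y).
Proof.
exists (('I_d * 'I_d) * 'I_4)%type, (fun m => (m.1.1 != m.1.2)%:R / 8), phase_l, phase_r.
split=> [m|x y]; first by rewrite divr_ge0 ?ler0n.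
rewrite /rank_one_sum sum_pair.
rewrite (eq_bigr (fun ij => (ij.1 != ij.2)%:R / 8 * (4 * pair_op ij.1 ij.2 x y)));
  last first.
  by case=> i j _; rewrite -sum_proj_phases mulr_sumr.
rewrite sum_pair -[LHS](mulKf (_ : 2 != 0)) ?pnatr_eq0 // -sum_offdiag_pair_op.
rewrite mulr_sumr; apply: eq_bigr => i _; rewrite mulr_sumr; apply: eq_bigr => j _.
by field.
Qed.

End TwoQudits.

Section RhoBC.
Variable d : nat.

Lemma rho_bc_convex l1 l2 l3 b1 c1 b2 c2 b3 c3 : l1 + l2 + l3 = 1 ->
  rho_bc d (l1 * b1 + l2 * b2 + l3 * b3) (l1 * c1 + l2 * c2 + l3 * c3) =2
  fun x y => l1 * rho_bc d b1 c1 x y + l2 * rho_bc d b2 c2 x y + l3 * rho_bc d b3 c3 x y.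
Proof.
move=> l_sum x y; rewrite /rho_bc /coef_a.
have -> : l3 = 1 - l1 - l2 by rewrite -l_sum; ring.
ring.
Qed.

Definition rho_index := ('I_d + (('I_d * 'I_d) + ('I_d * 'I_d)))%type.

Definition rho_weight (b c : algC) (m : rho_index) : algC :=
  match m with
  | inl _ => coef_a d b c
  | inr (inl ij) => b * (ij.1 < ij.2)%N%:R
  | inr (inr ij) => c * (ij.1 < ij.2)%N%:R
  end.

Definition rho_vec (m : rho_index) : bvec 'I_d 'I_d :=
  match m with
  | inl i => ket i i
  | inr (inl ij) => psi (-1) ij.1 ij.2
  | inr (inr ij) => psi 1 ij.1 ij.2
  end.

Lemma rho_bc_rank_one_sum b c : rho_bc d b c =2 rank_one_sum (rho_weight b c) rho_vec.
Proof.
move=> x y; rewrite /rank_one_sum !big_sumType !sum_pair /= addrA.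
congr (_ + _ + _); rewrite mulr_sumr //; apply: eq_bigr => i _.
all: rewrite big_mkcond mulr_sumr; apply: eq_bigr => j _.
all: by case: ltnP; rewrite /= ?mulr1 ?mulr0 ?mul0r.
Qed.

Lemma rho_bc_tens_pow_psd n b c : 0 <= coef_a d b c -> 0 <= b -> 0 <= c ->
  psd (tens_pow (n:=n) (rho_bc d b c)).
Proof.
move=> a_ge0 b_ge0 c_ge0 phi.
rewrite (eq_qform _ (eq_tens_pow (rho_bc_rank_one_sum b c))).
by apply: tens_pow_rank_one_sum_psd => -[i|[ij|ij]] //=; rewrite mulr_ge0 ?ler0n.
Qed.

End RhoBC.

Section Triangle.
Variable d : nat.
Hypothesis d_ge2 : (2 <= d)%N.

Lemma natr_d_gt0 : 0 < d%:R :> algC.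
Proof. by rewrite ltr0n (leq_trans _ d_ge2). Qed.

Lemma natr_d1_gt0 : 0 < d%:R - 1 :> algC.
Proof. by rewrite subr_gt0 ltr1n. Qed.

Lemma natr_d_neq0 : d%:R != 0 :> algC.
Proof. by rewrite gt_eqF ?natr_d_gt0. Qed.

Lemma natr_d1_neq0 : d%:R - 1 != 0 :> algC.
Proof. by rewrite gt_eqF ?natr_d1_gt0. Qed.

Lemma ptrans_rho_B : ptrans (rho_bc d (ptB d).1 (ptB d).2) =2 fun x y =>
  (2 * (d%:R * (d%:R - 1)))^-1 *
  (id_op x y - max_ent_op x y + (d%:R - 1) * diag_op x y).
Proof.
move=> x y; rewrite ptrans_rho_bcE /ptB /coef_a /=.
by field; rewrite natr_d_neq0 natr_d1_neq0.
Qed.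

Lemma ptrans_rho_K : ptrans (rho_bc d (ptK d).1 (ptK d).2) =2 fun x y =>
  (d%:R * (d%:R - 1))^-1 * (id_op x y - diag_op x y).
Proof.
move=> x y; rewrite ptrans_rho_bcE /ptK /coef_a /=.
by field; rewrite natr_d_neq0 natr_d1_neq0.
Qed.

Lemma separable_ptrans_rho_B : separable (ptrans (rho_bc d (ptB d).1 (ptB d).2)).
Proof.
apply: eq_separable (fun x y => esym (ptrans_rho_B x y)) _.
apply: (separableZ _ (separable_id_sub_max_ent_add_diag d)).
by rewrite invr_ge0 !mulr_ge0 ?ler0n ?ltW ?natr_d1_gt0.
Qed.

Lemma separable_ptrans_rho_K : separable (ptrans (rho_bc d (ptK d).1 (ptK d).2)).
Proof.
apply: eq_separable (fun x y => esym (ptrans_rho_K x y)) _.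
apply: (separableZ _ (separable_id_sub_diag d)).
by rewrite invr_ge0 mulr_ge0 ?ler0n ?ltW ?natr_d1_gt0.
Qed.

Lemma natr_2d1_gt0 : 0 < 2 * d%:R - 1 :> algC.
Proof. by rewrite subr_gt0 -natrM ltr1n (leq_trans d_ge2) ?leq_pmull. Qed.

Lemma natr_2d1_neq0 : 2 * d%:R - 1 != 0 :> algC.
Proof. by rewrite gt_eqF ?natr_2d1_gt0. Qed.

Lemma coef_a_G : coef_a d (ptG d).1 (ptG d).2 = (d%:R * (2 * d%:R - 1))^-1.
Proof.
by rewrite /coef_a /ptG /=; field; rewrite natr_d_neq0 natr_2d1_neq0.
Qed.

Lemma rho_G_tens_pow_psd n : psd (tens_pow (n:=n) (rho_bc d (ptG d).1 (ptG d).2)).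
Proof.
have N_ge0 : 0 <= d%:R * (2 * d%:R - 1) :> algC.
  by rewrite ltW ?mulr_gt0 ?natr_d_gt0 ?natr_2d1_gt0.
by apply: rho_bc_tens_pow_psd; rewrite ?coef_a_G /ptG /= ?invr_ge0 ?divr_ge0 ?ler0n.
Qed.

Lemma ptrans_rho_G_offdiag_gt0 (z : 'I_d * 'I_d) : z.1 != z.2 ->
  0 < ptrans (rho_bc d (ptG d).1 (ptG d).2) z z.
Proof.
move=> z12; rewrite ptrans_rho_bcE /diag_op /id_op /max_ent_op (negPf z12) !eqxx /ptG /=.
rewrite (_ : _ + _ + _ = 2 / (d%:R * (2 * d%:R - 1))); last first.
  by field; rewrite natr_d_neq0 natr_2d1_neq0.
by rewrite divr_gt0 ?mulr_gt0 ?natr_d_gt0 ?natr_2d1_gt0.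
Qed.

End Triangle.

Theorem lemma4 (d n : nat) (b c : algC) :
  (2 <= d)%N -> (1 <= n)%N ->
  pseudo_n_copy_undistillable n (rho_bc d (ptG d).1 (ptG d).2) ->
  in_triangle (ptB d) (ptG d) (ptK d) b c ->
  pseudo_n_copy_undistillable n (rho_bc d b c).
Proof.
move=> d_ge2 _ G_und [l1 [l2 [l3 [[l1_ge0 l2_ge0 l3_ge0 l_sum] [-> ->]]]]] phi rk_phi.
have d_gt0 : (0 < d)%N by apply: ltn_trans d_ge2.
pose z : 'I_d * 'I_d := (Ordinal d_gt0, Ordinal d_ge2).
pose S x y := l1 * ptrans (rho_bc d (ptB d).1 (ptB d).2) x y +
              l3 * ptrans (rho_bc d (ptK d).1 (ptK d).2) x y.
rewrite ptrans_tens_pow.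
apply: (nonneg_on_rank2_tens_pow_mix (ptrans_rho_G_offdiag_gt0 d_ge2 (z := z) isT) l2_ge0
  (S := S)); last by rewrite rk_phi.
- apply: separableD; apply: separableZ => //.
    exact: separable_ptrans_rho_B.
  exact: separable_ptrans_rho_K.
- by move=> x y; rewrite /S /ptrans rho_bc_convex //; ring.
- rewrite -ptrans_tens_pow; apply: nonneg_on_rank2_ptrans G_und.
  exact: rho_G_tens_pow_psd.
Qed.
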